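(* Let $A$ be a commutative ring. Any intersection $\bigcap_i \mathfrak{q}_i$ of primary ideals $\mathfrak{q}_i$ of $A$ is an $(A \setminus \bigcup_i \sqrt{\mathfrak{q}_i})$-factroid of $A$. In particular, any intersection $\bigcap_i \mathfrak{p}_i$ of prime ideals $\mathfrak{p}_i$ of $A$ is an $(A\setminus \bigcup_i \mathfrak{p}_i)$-factroid of $A$.
   Context: For $T\subseteq A$, a $T$-factroid of $A$ is an additive subgroup $F$ of $A$ such that for all $a\in A$ and $t\in T$, $ta\in F$ implies $a\in F$. *)

From mathcomp Require Import all_boot all_algebra.
Set Implicit Arguments. Unset Strict Implicit. Unset Printing Implicit Defensive.
Import GRing.Theory.
Local Open Scope ring_scope.

Definition is_ideal (A : comPzRingType) (I : A -> Prop) : Prop :=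
  I 0 /\ (forall x y, I x -> I y -> I (x - y)) /\ (forall a x, I x -> I (a * x)).

Definition is_prime_ideal (A : comPzRingType) (p : A -> Prop) : Prop :=
  is_ideal p /\ ~ p 1 /\ (forall a b, p (a * b) -> p a \/ p b).

Definition is_primary_ideal (A : comPzRingType) (q : A -> Prop) : Prop :=
  is_ideal q /\ ~ q 1 /\
  (forall a b, q (a * b) -> q a \/ exists n : nat, q (b ^+ n)).

Definition radical (A : comPzRingType) (q : A -> Prop) : A -> Prop :=
  fun x => exists n : nat, q (x ^+ n).

Definition is_add_subgroup (A : comPzRingType) (F : A -> Prop) : Prop :=
  F 0 /\ (forall x y, F x -> F y -> F (x - y)).

Definition is_factroid (A : comPzRingType) (T F : A -> Prop) : Prop :=
  is_add_subgroup F /\ (forall (a t : A), T t -> F (t * a) -> F a).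

From mathcomp Require Import all_boot all_algebra.
Import GRing.Theory.
Local Open Scope ring_scope.

(* By primariness, if t a lies in q and t is not in sqrt(q) then a lies in q,
   so q is a factroid for the complement of its radical; shrinking T and
   intersecting factroids for a common T both preserve factroids. Prime ideals
   are primary and equal to their radicals, which gives the second claim. *)

Section Factroids.

Context {A : comPzRingType}.
Implicit Types (T F : A -> Prop) (q p : A -> Prop).

Lemma ideal_add_subgroup {I : A -> Prop} : is_ideal I -> is_add_subgroup I.
Proof. by case=> I0 [IB _]. Qed.

Lemma factroid_subset {T' T F} :
  (forall t, T' t -> T t) -> is_factroid T F -> is_factroid T' F.
Proof. by move=> sT'T [FG FT]; split=> // a t /sT'T; apply: FT. Qed.

Lemma factroid_bigcap {I : Type} {T} {F : I -> A -> Prop} :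
  (forall i, is_factroid T (F i)) -> is_factroid T (fun a => forall i, F i a).
Proof.
move=> FT; split; last by move=> a t Tt Fta i; apply: (FT i).2 Tt (Fta i).
split=> [i | x y Fx Fy i]; first by case: (FT i).1.
by case: (FT i).1 => _; apply.
Qed.

Lemma primary_factroid {q} :
  is_primary_ideal q -> is_factroid (fun t => ~ radical q t) q.
Proof.
case=> qI [_ qprim]; split; first exact: ideal_add_subgroup.
by move=> a t nrad_t; rewrite mulrC => /qprim [//|/nrad_t].
Qed.

Lemma prime_primary {p} : is_prime_ideal p -> is_primary_ideal p.
Proof.
case=> pI [p1 pprime]; do 2!split=> //.
by move=> a b /pprime [pa | pb]; [left | right; exists 1%N].
Qed.

Lemma radical_prime {p t} : is_prime_ideal p -> radical p t -> p t.
Proof.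
case=> _ [p1 pprime] [n]; elim: n => [| n IHn]; first by rewrite expr0 => /p1.
by rewrite exprS => /pprime [// | /IHn].
Qed.

Lemma bigcap_primary_factroid {I : Type} {q : I -> A -> Prop} :
  (forall i, is_primary_ideal (q i)) ->
  is_factroid (fun t => ~ exists i, radical (q i) t) (fun a => forall i, q i a).
Proof.
move=> qprim; apply: factroid_bigcap => i.
have := primary_factroid (qprim i); apply: factroid_subset => t nrad rad_t.
by apply: nrad; exists i.
Qed.

End Factroids.

Theorem proposition4p7 (A : comPzRingType) :
  (forall (I : Type) (q : I -> A -> Prop),
      (forall i, is_primary_ideal (q i)) ->
      is_factroid (fun t : A => ~ exists i, radical (q i) t)
                  (fun a : A => forall i, q i a))
  /\
  (forall (I : Type) (p : I -> A -> Prop),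
      (forall i, is_prime_ideal (p i)) ->
      is_factroid (fun t : A => ~ exists i, p i t)
                  (fun a : A => forall i, p i a)).
Proof.
split=> [I q|I p pprime]; first exact: bigcap_primary_factroid.
have pprimary i : is_primary_ideal (p i) by apply: prime_primary.
move: (bigcap_primary_factroid pprimary); apply: factroid_subset => t np [i rad_t].
by apply: np; exists i; apply: radical_prime rad_t.
Qed.
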